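(* Let $\delta\in(0,1)$ and $\lambda_0\in(0,\pi)$. Let $\{U_t,t\in\mathbb{Z}\}$ be a zero-mean weakly stationary process with spectral density $f_U$ which is continuous on $[0,\pi]$ and satisfies $\inf_{\lambda\in[0,\pi]}f_U(\lambda)>0$. Let $\{X_{t,\delta},t\in\mathbb{Z}\}$ be a zero-mean weakly stationary process with spectral density $$f_\delta(\lambda)=\frac{f_U(\lambda)}{|1-(1-\delta)e^{-i(\lambda-\lambda_0)}|^{2}\,|1-(1-\delta)e^{-i(\lambda+\lambda_0)}|^{2}},\qquad \lambda\in\mathbb{R}.$$ Let $(a_{1,\delta},a_{2,\delta})$ be the unique minimizer of $(c_1,c_2)\mapsto \mathrm{E}(X_{t,\delta}-c_1X_{t-1,\delta}-c_2X_{t-2,\delta})^2$, and when $a_{2,\delta}<0$ define $\lambda_{0,\delta}=\arccos\big(a_{1,\delta}(1-a_{2,\delta})/(-4a_{2,\delta})\big)$. Then (i) $\lim_{\delta\to0}(a_{1,\delta},a_{2,\delta})=(2\cos(\lambda_0),-1)$; (ii) $\lim_{\delta\to0}\lambda_{0,\delta}=\lambda_0$. *)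

From HB Require Import structures.
From mathcomp Require Import all_boot all_order all_algebra.
From mathcomp Require Import all_classical all_reals all_analysis.
Unset Strict Implicit. Unset Printing Implicit Defensive.
Import Order.TTheory GRing.Theory Num.Theory.
Import numFieldNormedType.Exports.
Local Open Scope classical_set_scope.
Local Open Scope ring_scope.

(* X is a zero-mean (real, square-integrable) process indexed by Z with
   spectral density f on [-pi,pi]:  f >= 0, f integrable on [-pi,pi], and
   Cov(X_t, X_s) = E[X_t X_s] = \int_{-pi}^{pi} e^{i(t-s)l} f(l) dl
   (real part, i.e. with the kernel cos((t-s) l), since X is real).
   This makes X weakly stationary. *)
Definition has_spectral_density {R : realType} {d} {T : measurableType d}
  (P : probability T R) (X : int -> {RV P >-> R}) (f : R -> R) : Prop :=
  [/\ (forall l : R, - pi <= l <= pi -> 0 <= f l),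
      (@lebesgue_measure R).-integrable `[- pi, pi] (fun l => (f l)%:E),
      (forall t, P.-integrable setT (fun w => (X t w ^+ 2)%:E)),
      (forall t, (\int[P]_w (X t w)%:E)%E = 0%E) &
      (forall t s, (\int[P]_w (X t w * X s w)%:E)%E =
         (\int[lebesgue_measure]_(l in `[(- pi)%R, (pi : R)]) (cos ((t - s)%:~R * l) * f l)%:E)%E)].

Definition mse2 {R : realType} {d} {T : measurableType d}
  (P : probability T R) (X : int -> {RV P >-> R}) (t : int) (c1 c2 : R) : \bar R :=
  (\int[P]_w ((X t w - c1 * X (t - 1)%R w - c2 * X (t - 2)%R w) ^+ 2)%:E)%E.

Definition unique_minimizer {R : realType} {d} {T : measurableType d}
  (P : probability T R) (X : int -> {RV P >-> R}) (a1 a2 : R) : Prop :=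
  forall t : int, forall c1 c2 : R, (c1, c2) <> (a1, a2) ->
    (mse2 P X t a1 a2 < mse2 P X t c1 c2)%E.

(* |1 - r e^{-i x}|^2 = 1 - 2 r cos x + r^2 *)
Definition sqmod1 {R : realType} (r x : R) : R := 1 - 2 * r * cos x + r ^+ 2.

Definition f_delta {R : realType} (fU : R -> R) (lambda0 delta : R) (l : R) : R :=
  fU l / (sqmod1 (1 - delta) (l - lambda0) * sqmod1 (1 - delta) (l + lambda0)).

Definition lambda0_delta {R : realType} (a1 a2 : R) : R :=
  acos (a1 * (1 - a2) / (- 4 * a2)).

From HB Require Import structures.
From mathcomp Require Import all_boot all_order all_algebra.
From mathcomp Require Import all_classical all_reals all_analysis.
From mathcomp Require Import measurable_realfun ring lra.
Import Order.TTheory GRing.Theory Num.Theory.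
Import numFieldNormedType.Exports.
Local Open Scope classical_set_scope.
Local Open Scope ring_scope.

(* The spectral density f_delta has double poles at +-lambda0 which approach
   the unit circle as delta -> 0.  On [lambda0, lambda0 + delta] it is of size
   delta^-2, so its total mass gamma_0 is at least of order 1/delta, whereas
   the weighted mass of |cos l - cos lambda0| f_delta stays bounded (split it
   at height eta = sqrt delta).  Hence the normalized autocovariances
   rho_k = gamma_k / gamma_0 converge to cos (k lambda0) for k = 1, 2.  The
   unique minimizer of the prediction error solves the Yule-Walker equations
   a1 + a2 rho_1 = rho_1 and a1 rho_1 + a2 = rho_2, whose solution depends
   continuously on (rho_1, rho_2) near (cos lambda0, cos (2 lambda0)), where
   it equals (2 cos lambda0, -1).  Finally the argument of acos in
   lambda0_delta tends to cos lambda0, and acos is continuous there. *)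

Lemma mul_div_le_peter_paul {R : realFieldType} (x D u eta : R) :
  0 < D -> x ^+ 2 <= D -> 0 <= u -> 0 < eta ->
  x * (u / D) <= eta * (u / D) + u / eta.
Proof.
move=> D0 xD u0 eta0.
have -> : u / eta = D / eta * (u / D) by field; rewrite !gt_eqF.
rewrite -mulrDl; apply: ler_wpM2r; first by rewrite divr_ge0 // ltW.
rewrite -(ler_pM2r eta0) mulrDl divfK ?gt_eqF //.
nra.
Qed.

Lemma lincoef_eq0_of_strict_min {R : realFieldType} (a b : R) :
  (forall s, s != 0 -> 0 < s * b + s ^+ 2 * a) -> b = 0.
Proof.
move=> min0; apply/eqP; apply: contraT => b0.
pose M := `|a| + 1.
have M0 : 0 < M by rewrite /M; have := normr_ge0 a; lra.
have aM : a < M by rewrite /M; have := ler_norm a; lra.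
have := min0 (- b / M); rewrite mulf_neq0 ?oppr_eq0 ?invr_eq0 ?(gt_eqF M0) // => /(_ isT).
have -> : - b / M * b + (- b / M) ^+ 2 * a = b ^+ 2 / M * (a / M - 1).
  by field; rewrite gt_eqF.
have b2M : 0 < b ^+ 2 / M by rewrite divr_gt0 // exprn_even_gt0.
by rewrite pmulr_rgt0 // subr_gt0 ltr_pdivlMr // mul1r ltNge (ltW aM).
Qed.

Lemma yule_walker2_solve {F : fieldType} (p q a1 a2 : F) :
  a1 + a2 * p = p -> a1 * p + a2 = q -> 1 - p * p != 0 ->
  a1 = p * (1 - q) / (1 - p * p) /\ a2 = (q - p * p) / (1 - p * p).
Proof.
move=> e1 e2 nz; split; apply: (canRL (mulfK nz)).
- rewrite (_ : a1 * _ = (a1 + a2 * p) - p * (a1 * p + a2)); last by ring.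
  by rewrite e1 e2; ring.
- rewrite (_ : a2 * _ = (a1 * p + a2) - p * (a1 + a2 * p)); last by ring.
  by rewrite e1 e2.
Qed.

Section cosine.
Context {R : realType}.
Implicit Types x y : R.

Lemma cos_itv x : -1 <= cos x <= 1.
Proof. by rewrite cos_geN1 cos_le1. Qed.

Lemma cos_mul2 x : cos (2 * x) = 2 * cos x ^+ 2 - 1.
Proof. by rewrite mulr_natl cos_mulr2n mulr_natl. Qed.

Lemma cos_dist_le x y : `|cos x - cos y| <= `|x - y|.
Proof.
wlog xy : x y / y <= x.
  move=> H; have [/H //|/ltW /H] := leP y x.
  by rewrite distrC [`|y - x|]distrC.
have cos_cont : {within `[y, x], continuous (@cos R)}.
  by apply: continuous_subspaceT; exact: continuous_cos.
have [c _ ->] := MVT_segment xy (fun c _ => is_derive_cos c) cos_cont.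
by rewrite normrM normrN ler_piMl // sin_max.
Qed.

Lemma cos_mul2_dist_le x y : `|cos (2 * x) - cos (2 * y)| <= 4 * `|cos x - cos y|.
Proof.
have -> : cos (2 * x) - cos (2 * y) = 2 * (cos x + cos y) * (cos x - cos y).
  by rewrite !cos_mul2; ring.
rewrite normrM ler_wpM2r // normrM ger0_norm //.
have := ler_normD (cos x) (cos y); have := cos_max x; have := cos_max y.
lra.
Qed.

Lemma cos_lt1 x : 0 < x < pi -> -1 < cos x < 1.
Proof.
move=> /andP[x0 xpi]; have pi0 : 0 <= pi :> R by rewrite ltW // pi_gt0.
apply/andP; split; [rewrite -cospi | rewrite -cos0]; rewrite ltr_cos //.
all: by rewrite in_itv /= ?lexx ?pi0 ?ltW.
Qed.

End cosine.

Section square_integrable.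
Context {d} {T : measurableType d} {R : realType} {mu : {measure set T -> \bar R}}.
Context {D : set T} (mD : measurable D).

Lemma integrable_mul_of_sqr (f g : T -> R) :
  measurable_fun D f -> measurable_fun D g ->
  mu.-integrable D (EFin \o (fun x => f x ^+ 2)) ->
  mu.-integrable D (EFin \o (fun x => g x ^+ 2)) ->
  mu.-integrable D (EFin \o (fun x => f x * g x)).
Proof.
move=> mf mg f2 g2; apply: le_integrable mD _ _ _ _ (integrableD mD f2 g2).
  by apply/measurable_EFinP; exact: measurable_funM.
move=> x Dx /=; rewrite lee_fin normrM (ger0_norm (addr_ge0 (sqr_ge0 _) (sqr_ge0 _))).
rewrite -[f x ^+ 2]real_normK ?num_real // -[g x ^+ 2]real_normK ?num_real //.
have := sqr_ge0 (`|f x| - `|g x|); have := mulr_ge0 (normr_ge0 (f x)) (normr_ge0 (g x)).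
nra.
Qed.

Lemma integral_sqr_sum (I : Type) (s : seq I) (b : I -> R) (Y : I -> T -> R) :
  (forall i, measurable_fun D (Y i)) ->
  (forall i, mu.-integrable D (EFin \o (fun x => Y i x ^+ 2))) ->
  (\int[mu]_(x in D) ((\sum_(i <- s) b i * Y i x) ^+ 2)%:E =
   (\sum_(i <- s) \sum_(j <- s) b i * b j * \int[mu]_(x in D) (Y i x * Y j x))%:E)%E.
Proof.
move=> mY Y2.
have YY i j := integrable_mul_of_sqr _ _ (mY i) (mY j) (Y2 i) (Y2 j).
have bYY i j : mu.-integrable D
    (EFin \o (fun x => b i * b j * (Y i x * Y j x))) := integrableZl mD _ (YY i j).
transitivity (\int[mu]_(x in D)
    (\sum_(i <- s) \sum_(j <- s) (b i * b j * (Y i x * Y j x))%:E))%E.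
  apply: eq_integral => x _; symmetry.
  under eq_bigr do rewrite sumEFin.
  rewrite sumEFin expr2 mulr_suml; congr EFin; apply: eq_bigr => i _.
  by rewrite mulr_sumr; apply: eq_bigr => j _; rewrite mulrACA.
rewrite integral_sum //; last by move=> i; apply: integrable_sum => // j _; exact: bYY.
rewrite -sumEFin; apply: eq_bigr => i _.
rewrite (integral_sum mD (bYY i)) -sumEFin; apply: eq_bigr => j _.
under eq_integral do rewrite /= EFinM.
rewrite integralZl //; last exact: YY.
by rewrite /Rintegral [in RHS]EFinM fineK // (integrable_fin_num mD (YY i j)).
Qed.

End square_integrable.

Section spectral_covariance.
Context {R : realType}.

Definition spectral_cov (f : R -> R) (k : int) : R :=
  \int[lebesgue_measure]_(l in `[- pi, pi]) (cos (k%:~R * l) * f l).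

Lemma spectral_covN f k : spectral_cov f (- k) = spectral_cov f k.
Proof. by apply: eq_Rintegral => l _; rewrite mulrNz mulNr cosN. Qed.

Lemma spectral_cov0 f :
  spectral_cov f 0 = \int[lebesgue_measure]_(l in `[- pi, pi]) f l.
Proof. by apply: eq_Rintegral => l _; rewrite mul0r cos0 mul1r. Qed.

Lemma measurable_cos_mul (D : set R) (k : R) :
  measurable_fun D (fun l => cos (k * l)).
Proof.
apply: measurableT_comp; last exact: mulrl_measurable.
exact: continuous_measurable_fun (@continuous_cos R).
Qed.

Lemma integrable_cos_mul (D : set R) (f : R -> R) (k : R) : measurable D ->
  lebesgue_measure.-integrable D (EFin \o f) ->
  lebesgue_measure.-integrable D (EFin \o (fun l => cos (k * l) * f l)).
Proof.
move=> mD fi.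
have cos_bounded : [bounded cos (k * l) | l in D].
  by exists 1; split => // M M1 l _; exact: le_trans (cos_max _) (ltW M1).
apply: (eq_integrable (mu := lebesgue_measure) mD _ _ _
  (integrableMr (mu := lebesgue_measure) mD (measurable_cos_mul D k) cos_bounded fi)).
by move=> l _; rewrite /= EFinM.
Qed.

End spectral_covariance.

Section yule_walker.
Context {R : realType} {d} {T : measurableType d} {P : probability T R}.
Context {X : int -> {RV P >-> R}} {f : R -> R}.
Hypothesis Xf : has_spectral_density P X f.

Local Notation gamma := (spectral_cov f).

Lemma spectral_density_cov (t s : int) :
  \int[P]_w (X t w * X s w) = gamma (t - s).
Proof.
have [_ fi X2 _ Xcov] := Xf.
have mX u : measurable_fun setT (X u) by exact: measurable_funPT.
have XX := integrable_mul_of_sqr measurableT _ _ (mX t) (mX s) (X2 t) (X2 s).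
apply: EFin_inj; rewrite /Rintegral fineK ?(integrable_fin_num measurableT XX) //.
rewrite Xcov fineK //.
have := integrable_cos_mul _ _ ((t - s)%:~R) (measurable_itv `[(- pi)%R, pi]) fi.
exact: integrable_fin_num.
Qed.

Lemma mse2E (t : int) (c1 c2 : R) : mse2 P X t c1 c2 =
  (gamma 0 * (1 + c1 ^+ 2 + c2 ^+ 2) - 2 * c1 * (1 - c2) * gamma 1
   - 2 * c2 * gamma 2)%:E.
Proof.
pose b (i : int) := if i == 0 then 1 else if i == 1 then - c1 else - c2.
pose Y i := X (t - i).
have mY i : measurable_fun setT (Y i) by exact: measurable_funPT.
have [_ _ X2 _ _] := Xf.
transitivity (\int[P]_w ((\sum_(i <- [:: 0; 1; 2]) b i * Y i w) ^+ 2)%:E)%E.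
  rewrite /mse2; apply: eq_integral => w _ /=.
  by rewrite !big_cons big_nil /b /Y /= subr0 mul1r addr0 !mulNr addrA.
rewrite (integral_sqr_sum measurableT) //; last by move=> i; exact: X2.
congr EFin.
have lag (i j : int) : t - i - (t - j) = j - i by ring.
under eq_bigr do under eq_bigr do rewrite spectral_density_cov lag.
rewrite !big_cons !big_nil /b /= !subr0 !sub0r !subrr.
rewrite (_ : 2 - 1 = 1 :> int) // (_ : 1 - 2 = - 1 :> int) // !spectral_covN.
ring.
Qed.

Lemma yule_walker2 (a1 a2 : R) : unique_minimizer P X a1 a2 ->
  a1 * gamma 0 + a2 * gamma 1 = gamma 1 /\ a1 * gamma 1 + a2 * gamma 0 = gamma 2.
Proof.
move=> amin.
pose Q c1 c2 := gamma 0 * (1 + c1 ^+ 2 + c2 ^+ 2) - 2 * c1 * (1 - c2) * gamma 1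
  - 2 * c2 * gamma 2.
have Qmin c1 c2 : (c1, c2) <> (a1, a2) -> Q a1 a2 < Q c1 c2.
  by move/(amin 0); rewrite !mse2E lte_fin.
have dQ1 : 2 * (a1 * gamma 0 + a2 * gamma 1 - gamma 1) = 0.
  apply: (lincoef_eq0_of_strict_min (gamma 0)) => s s0.
  have /Qmin : (a1 + s, a2) <> (a1, a2).
    by case=> /eqP; rewrite -[X in _ == X]addr0 (inj_eq (addrI a1)) (negbTE s0).
  by rewrite -subr_gt0 /Q; congr (0 < _); ring.
have dQ2 : 2 * (a1 * gamma 1 + a2 * gamma 0 - gamma 2) = 0.
  apply: (lincoef_eq0_of_strict_min (gamma 0)) => s s0.
  have /Qmin : (a1, a2 + s) <> (a1, a2).
    by case=> /eqP; rewrite -[X in _ == X]addr0 (inj_eq (addrI a2)) (negbTE s0).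
  by rewrite -subr_gt0 /Q; congr (0 < _); ring.
by split; lra.
Qed.

Lemma yule_walker2_ratio (a1 a2 : R) :
  unique_minimizer P X a1 a2 -> gamma 0 != 0 ->
  a1 + a2 * (gamma 1 / gamma 0) = gamma 1 / gamma 0 /\
  a1 * (gamma 1 / gamma 0) + a2 = gamma 2 / gamma 0.
Proof.
move=> /yule_walker2[e1 e2] g0.
by split; [rewrite -[in RHS]e1 | rewrite -[in RHS]e2]; field.
Qed.

End yule_walker.

Section sqmod1_pair.
Context {R : realType}.

(* [sqmod1 r (l - a) * sqmod1 r (l + a)] in terms of [c = cos l] and
   [c0 = cos a]: the first term is at least [(1 - r) ^+ 4], the second one
   vanishes only at the poles [l = +-a]. *)
Definition sqmod1_pair (r c c0 : R) :=
  (1 - r) ^+ 2 * ((1 + r) ^+ 2 - 4 * r * c * c0) + 4 * r ^+ 2 * (c - c0) ^+ 2.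

Lemma sqmod1_pairE (r l a : R) :
  sqmod1 r (l - a) * sqmod1 r (l + a) = sqmod1_pair r (cos l) (cos a).
Proof.
rewrite /sqmod1 /sqmod1_pair cosB cosD.
have -> : (1 - 2 * r * (cos l * cos a + sin l * sin a) + r ^+ 2) *
  (1 - 2 * r * (cos l * cos a - sin l * sin a) + r ^+ 2) =
  (1 - 2 * r * cos l * cos a + r ^+ 2) ^+ 2 -
  4 * r ^+ 2 * (sin l ^+ 2) * (sin a ^+ 2) by ring.
by rewrite !sin2cos2; ring.
Qed.

Lemma sqmod1_pair_gt0 (r c c0 : R) : 0 <= r < 1 -> -1 <= c <= 1 -> -1 <= c0 <= 1 ->
  0 < sqmod1_pair r c c0.
Proof.
move=> /andP[r0 r1] /andP[c1 c2] /andP[d1 d2]; rewrite /sqmod1_pair.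
have h1 : 0 < (1 - r) ^+ 2 * (1 - r) ^+ 2 by rewrite -expr2 exprn_gt0 ?exprn_gt0 ?subr_gt0.
have h2 : 0 <= (1 - r) ^+ 2 * (r * (1 - c * c0)) by rewrite mulr_ge0 ?sqr_ge0 ?mulr_ge0 //; nra.
have h3 : 0 <= r ^+ 2 * (c - c0) ^+ 2 by rewrite mulr_ge0 ?sqr_ge0.
lra.
Qed.

Lemma sqmod1_pair_ge_dist (r c c0 : R) : 0 <= r -> -1 <= c <= 1 -> -1 <= c0 <= 1 ->
  4 * r ^+ 2 * (c - c0) ^+ 2 <= sqmod1_pair r c c0.
Proof.
move=> r0 /andP[c1 c2] /andP[d1 d2]; rewrite /sqmod1_pair.
have h1 : 0 <= (1 - r) ^+ 2 * (1 - r) ^+ 2 by rewrite -expr2 sqr_ge0.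
have h2 : 0 <= (1 - r) ^+ 2 * (r * (1 - c * c0)) by rewrite mulr_ge0 ?sqr_ge0 ?mulr_ge0 //; nra.
lra.
Qed.

Lemma sqmod1_pair_le (r c c0 : R) : 0 <= r <= 1 -> -1 <= c <= 1 -> -1 <= c0 <= 1 ->
  sqmod1_pair r c c0 <= 8 * (1 - r) ^+ 2 + 4 * (c - c0) ^+ 2.
Proof.
move=> /andP[r0 r1] /andP[c1 c2] /andP[d1 d2]; rewrite /sqmod1_pair.
have h1 : 0 <= (1 - r) ^+ 2 * (r * (1 + c * c0)) by rewrite mulr_ge0 ?sqr_ge0 ?mulr_ge0 //; nra.
have h2 : 0 <= (1 - r) ^+ 2 * ((1 - r) * (7 + r)).
  by rewrite mulr_ge0 ?sqr_ge0 ?mulr_ge0 //; lra.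
have h4 : 0 <= (1 - r ^+ 2) * (c - c0) ^+ 2 by rewrite mulr_ge0 ?sqr_ge0 // subr_ge0; nra.
lra.
Qed.

End sqmod1_pair.

Section spectral_concentration.
Context {R : realType} {lambda0 m : R} {fU : R -> R}.
Hypothesis lambda0_itv : 0 < lambda0 < pi.
Hypothesis fU_ge0 : forall l, - pi <= l <= pi -> 0 <= fU l.
Hypothesis fU_int : lebesgue_measure.-integrable `[- pi, pi] (EFin \o fU).
Hypothesis fU_ge_m : forall l, 0 <= l <= pi -> m <= fU l.
Hypothesis m_gt0 : 0 < m.
Hypothesis f_delta_int : forall delta, 0 < delta < 1 ->
  lebesgue_measure.-integrable `[- pi, pi] (EFin \o f_delta fU lambda0 delta).

Local Notation F delta := (f_delta fU lambda0 delta).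
Local Notation gamma delta := (spectral_cov (f_delta fU lambda0 delta)).
Local Notation IU := (\int[lebesgue_measure]_(l in `[- pi, pi]) fU l).
Local Notation D delta l := (sqmod1_pair (1 - delta) (cos l) (cos lambda0)).

Lemma f_deltaE delta l : F delta l = fU l / D delta l.
Proof. by rewrite /f_delta sqmod1_pairE. Qed.

Lemma f_delta_denom_gt0 delta l : 0 < delta <= 1 -> 0 < D delta l.
Proof. by move=> ?; apply: sqmod1_pair_gt0; rewrite ?cos_itv //; lra. Qed.

Lemma f_delta_ge0 delta l : 0 < delta <= 1 -> - pi <= l <= pi -> 0 <= F delta l.
Proof.
by move=> d01 lI; rewrite f_deltaE divr_ge0 ?fU_ge0 // ltW // f_delta_denom_gt0.
Qed.

Lemma f_delta_ge_near_pole delta l : 0 < delta <= 1/2 ->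
  lambda0 <= l <= lambda0 + delta -> l <= pi -> m / (12 * delta ^+ 2) <= F delta l.
Proof.
move=> /andP[d0 d12] /andP[l1 l2] lpi; have [l0 _] := andP lambda0_itv.
have cos_near : (cos l - cos lambda0) ^+ 2 <= delta ^+ 2.
  rewrite -real_normK ?num_real // ler_sqr ?nnegrE ?(ltW d0) //.
  by apply: le_trans (cos_dist_le _ _) _; rewrite ger0_norm; lra.
have D_le : D delta l <= 12 * delta ^+ 2.
  apply: le_trans (sqmod1_pair_le (1 - delta) _ _ _ (cos_itv l) (cos_itv lambda0)) _.
    lra.
  by rewrite (_ : 1 - (1 - delta) = delta); [nra | ring].
have D0 : 0 < D delta l by apply: f_delta_denom_gt0; lra.
rewrite f_deltaE; apply: (@le_trans _ _ (m / D delta l)).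
  by rewrite ler_pM2l // lef_pV2 ?posrE // mulr_gt0 // exprn_gt0.
by apply: ler_wpM2r; [rewrite invr_ge0 ltW | apply: fU_ge_m; lra].
Qed.

Lemma spectral_cov0_f_delta_ge delta : 0 < delta <= 1/2 -> delta <= pi - lambda0 ->
  m / (12 * delta) <= gamma delta 0.
Proof.
move=> d12 dpi; have [d0 _] := andP d12; have d01 : 0 < delta < 1 by lra.
pose c := m / (12 * delta ^+ 2); pose J := `[lambda0, lambda0 + delta].
have mI : measurable (`[- pi, pi]%classic : set R) := measurable_itv _.
have mJ : measurable [set` J] := measurable_itv _.
have JI : [set` J] `<=` `[- pi, pi]%classic.
  move=> l; rewrite /= !in_itv /= => /andP[? ?]; apply/andP.
  by have [? ?] := andP lambda0_itv; split; lra.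
have mF := measurable_int _ (f_delta_int _ d01).
have F0 l : `[- pi, pi]%classic l -> (0 <= (F delta l)%:E)%E.
  by rewrite /= in_itv /= => lI; rewrite lee_fin f_delta_ge0 //; lra.
have cJ : (\int[lebesgue_measure]_(l in [set` J]) c%:E = (c * delta)%:E)%E.
  rewrite integral_cst // [RHS]EFinM; congr (_ * _)%E.
  etransitivity; first exact: lebesgue_measure_itv J.
  by rewrite /= lte_fin ltrDl d0 -EFinB addrAC subrr add0r.
have : ((c * delta)%:E <= (gamma delta 0)%:E)%E.
  rewrite spectral_cov0 /Rintegral fineK; last first.
    by apply: integrable_fin_num => //; exact: f_delta_int.
  rewrite -cJ; apply: le_trans (ge0_subset_integral lebesgue_measure mJ mI mF F0 JI).
  apply: ge0_le_integral => //.
  - by move=> l _; rewrite lee_fin divr_ge0 // ?ltW // mulr_gt0 // exprn_gt0.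
  - exact: measurable_funS mF.
  - move=> l; rewrite /= in_itv /= => lJ; rewrite lee_fin f_delta_ge_near_pole //.
    by have [? ?] := andP lJ; lra.
by rewrite lee_fin (_ : c * delta = m / (12 * delta)) // /c; field; rewrite gt_eqF.
Qed.

Lemma spectral_cov0_f_delta_gt0 : \forall delta \near 0^'+, 0 < gamma delta 0.
Proof.
have [l0 lpi] := andP lambda0_itv.
near=> delta; have d0 : 0 < delta by near: delta; exact: nbhs_right_gt.
apply: lt_le_trans (spectral_cov0_f_delta_ge _ _ _); first by rewrite divr_gt0 ?mulr_gt0.
  by rewrite d0; near: delta; apply: nbhs_right_le; lra.
by near: delta; apply: nbhs_right_le; lra.
Unshelve. all: by end_near.
Qed.

Lemma f_delta_cos_dist_le (k : int) (K eta delta l : R) :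
  `|cos (k%:~R * l) - cos (k%:~R * lambda0)| <= K * `|cos l - cos lambda0| ->
  0 <= K -> 0 < delta <= 1/2 -> 0 < eta -> - pi <= l <= pi ->
  `|cos (k%:~R * l) * F delta l - cos (k%:~R * lambda0) * F delta l|
    <= K * (eta * F delta l + fU l / eta).
Proof.
move=> cos_lip K0 /andP[d0 d12] eta0 lI.
have D0 : 0 < D delta l by apply: f_delta_denom_gt0; lra.
have F0 : 0 <= F delta l by apply: f_delta_ge0 => //; lra.
rewrite -mulrBl normrM (ger0_norm F0); apply: le_trans (ler_wpM2r F0 cos_lip) _.
rewrite -mulrA ler_wpM2l // f_deltaE.
apply: mul_div_le_peter_paul => //; last exact: fU_ge0.
rewrite real_normK ?num_real //.
apply: le_trans (sqmod1_pair_ge_dist (1 - delta) _ _ _ (cos_itv l) (cos_itv lambda0)).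
  by rewrite ler_peMl ?sqr_ge0 //; nra.
lra.
Qed.

Lemma spectral_cov_f_delta_dist (k : int) (K eta delta : R) :
  (forall l, `|cos (k%:~R * l) - cos (k%:~R * lambda0)| <= K * `|cos l - cos lambda0|) ->
  0 <= K -> 0 < delta <= 1/2 -> 0 < eta ->
  `|gamma delta k - cos (k%:~R * lambda0) * gamma delta 0|
    <= K * (eta * gamma delta 0 + IU / eta).
Proof.
move=> cos_lip K0 d12 eta0; have [d0 _] := andP d12; have d01 : 0 < delta < 1 by lra.
have mI : measurable (`[- pi, pi]%classic : set R) := measurable_itv _.
set ck := cos (k%:~R * lambda0).
have iF := f_delta_int _ d01.
have icF := integrable_cos_mul _ _ k%:~R mI iF.
have iZF : lebesgue_measure.-integrable `[- pi, pi]
  (EFin \o (fun l => ck * F delta l)) := integrableZl (mu := lebesgue_measure) mI ck iF.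
have idiff : lebesgue_measure.-integrable `[- pi, pi]
  (EFin \o (fun l => cos (k%:~R * l) * F delta l - ck * F delta l)) :=
  integrableB (mu := lebesgue_measure) mI icF iZF.
have iEF : lebesgue_measure.-integrable `[- pi, pi]
  (EFin \o (fun l => eta * F delta l)) := integrableZl (mu := lebesgue_measure) mI eta iF.
have iZU : lebesgue_measure.-integrable `[- pi, pi]
  (EFin \o (fun l => fU l / eta)) := integrableZr (mu := lebesgue_measure) mI eta^-1 fU_int.
have iD : lebesgue_measure.-integrable `[- pi, pi]
  (EFin \o (fun l => eta * F delta l + fU l / eta)) :=
  integrableD (mu := lebesgue_measure) mI iEF iZU.
have iKD : lebesgue_measure.-integrable `[- pi, pi]
  (EFin \o (fun l => K * (eta * F delta l + fU l / eta))) :=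
  integrableZl (mu := lebesgue_measure) mI K iD.
have -> : K * (eta * gamma delta 0 + IU / eta) =
  \int[lebesgue_measure]_(l in `[- pi, pi]) (K * (eta * F delta l + fU l / eta)).
  by rewrite [RHS]RintegralZl // RintegralD // RintegralZl // RintegralZr // spectral_cov0.
rewrite spectral_cov0 -RintegralZl // -RintegralB //.
apply: le_trans (le_normr_Rintegral (mu := lebesgue_measure) mI idiff) _.
apply: le_Rintegral => //; first exact: integrable_norm idiff.
by move=> l; rewrite /= in_itv /= => lI; exact: f_delta_cos_dist_le.
Qed.

Lemma spectral_cov_ratio_f_delta_dist (k : int) (K delta : R) :
  (forall l, `|cos (k%:~R * l) - cos (k%:~R * lambda0)| <= K * `|cos l - cos lambda0|) ->
  0 <= K -> 0 < delta <= 1/2 -> delta <= pi - lambda0 ->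
  `|gamma delta k / gamma delta 0 - cos (k%:~R * lambda0)|
    <= K * (1 + 12 * IU / m) * Num.sqrt delta.
Proof.
move=> cos_lip K0 d12 dpi; have [d0 _] := andP d12.
have g0_ge := spectral_cov0_f_delta_ge _ d12 dpi.
have g0 : 0 < gamma delta 0 by apply: lt_le_trans g0_ge; rewrite divr_gt0 // mulr_gt0.
have IU0 : 0 <= IU by apply: Rintegral_ge0 => l; rewrite /= in_itv /=; exact: fU_ge0.
(* the split height [eta = sqrt delta] balances [eta * gamma_0] against [IU / eta] *)
set e := Num.sqrt delta; have e0 : 0 < e by rewrite sqrtr_gt0.
have ee : e * e = delta by rewrite -expr2 sqr_sqrtr // ltW.
have := spectral_cov_f_delta_dist _ _ _ _ cos_lip K0 d12 e0.
set ck := cos _; set gk := gamma delta k; set g := gamma delta 0 => dist.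
have -> : gk / g - ck = (gk - ck * g) / g by field; rewrite gt_eqF.
rewrite normrM normfV (gtr0_norm g0) ler_pdivrMr //; apply: le_trans dist _.
have IU_e : IU / e <= 12 * IU / m * e * g.
  have mg : m <= g * (12 * delta) by rewrite -ler_pdivrMr ?mulr_gt0.
  rewrite ler_pdivrMr // (_ : _ * e = IU * (g * (12 * (e * e)) / m)); last by ring.
  by rewrite ee -[X in X <= _]mulr1 ler_wpM2l // ler_pdivlMr // mul1r.
rewrite (_ : _ * e * g = K * (e * g + 12 * IU / m * e * g)); last by ring.
by apply: ler_wpM2l => //; rewrite lerD2l.
Qed.

Lemma spectral_cov_ratio_f_delta_cvg (k : int) (K : R) :
  (forall l, `|cos (k%:~R * l) - cos (k%:~R * lambda0)| <= K * `|cos l - cos lambda0|) ->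
  0 <= K ->
  gamma delta k / gamma delta 0 @[delta --> 0^'+] --> cos (k%:~R * lambda0).
Proof.
move=> cos_lip K0; set C := K * (1 + 12 * IU / m); set ck := cos _.
have sqrt0 : Num.sqrt x @[x --> 0^'+] --> (0 : R).
  by rewrite -[X in _ --> X]sqrtr0; apply: cvg_within_filter; exact: sqrt_continuous.
have C_sqrt0 : C * Num.sqrt x @[x --> 0^'+] --> (0 : R).
  by rewrite -[X in _ --> X](mulr0 C); apply: cvgM => //; exact: cvg_cst.
apply: (@squeeze_cvgr _ _ _ _ (fun x => ck - C * Num.sqrt x) (fun x => ck + C * Num.sqrt x)).
- near=> delta; rewrite -ler_distl; apply: spectral_cov_ratio_f_delta_dist => //.
  + by apply/andP; split; near: delta; [exact: nbhs_right_gt | apply: nbhs_right_le; lra].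
  + by near: delta; apply: nbhs_right_le; have [? ?] := andP lambda0_itv; lra.
- by rewrite -[X in _ --> X]subr0; apply: cvgB => //; exact: cvg_cst.
- by rewrite -[X in _ --> X]addr0; apply: cvgD => //; exact: cvg_cst.
Unshelve. all: by end_near.
Qed.

Lemma spectral_cov1_ratio_f_delta_cvg :
  gamma delta 1 / gamma delta 0 @[delta --> 0^'+] --> cos lambda0.
Proof.
move: (spectral_cov_ratio_f_delta_cvg 1 1); rewrite (_ : 1%:~R = 1 :> R) // mul1r.
by apply => // l; rewrite !mul1r.
Qed.

Lemma spectral_cov2_ratio_f_delta_cvg :
  gamma delta 2 / gamma delta 0 @[delta --> 0^'+] --> cos (2 * lambda0).
Proof.
move: (spectral_cov_ratio_f_delta_cvg 2 4); rewrite (_ : 2%:~R = 2 :> R) //.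
by apply => // l; exact: cos_mul2_dist_le.
Qed.

Lemma yule_walker2_f_delta (a1 a2 : R -> R) :
  (forall delta, 0 < delta < 1 ->
     exists d (T : measurableType d) (P : probability T R) (X : int -> {RV P >-> R}),
       has_spectral_density P X (F delta) /\ unique_minimizer P X (a1 delta) (a2 delta)) ->
  \forall delta \near 0^'+,
    a1 delta + a2 delta * (gamma delta 1 / gamma delta 0) = gamma delta 1 / gamma delta 0 /\
    a1 delta * (gamma delta 1 / gamma delta 0) + a2 delta = gamma delta 2 / gamma delta 0.
Proof.
move=> Xdelta; near=> delta.
have d01 : 0 < delta < 1.
  by apply/andP; split; near: delta; [exact: nbhs_right_gt | apply: nbhs_right_lt; lra].
have [d [T [P [X [Xf amin]]]]] := Xdelta delta d01.
apply: (yule_walker2_ratio Xf _ _ amin); rewrite gt_eqF //.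
by near: delta; exact: spectral_cov0_f_delta_gt0.
Unshelve. all: by end_near.
Qed.

End spectral_concentration.

Section ar2_limits.
Context {R : realType} {T : Type} {F : set_system T} {FF : ProperFilter F}.
Context {lambda0 : R} {a1 a2 : T -> R}.
Hypothesis lambda0_itv : 0 < lambda0 < pi.

Lemma ar2_coefs_cvg (p q : T -> R) :
  p @ F --> cos lambda0 -> q @ F --> cos (2 * lambda0) ->
  (\forall x \near F, a1 x + a2 x * p x = p x /\ a1 x * p x + a2 x = q x) ->
  a1 @ F --> 2 * cos lambda0 /\ a2 @ F --> (-1 : R).
Proof.
move=> p_cvg q_cvg yw; set c := cos lambda0.
have c_nz : 1 - c * c != 0.
  by rewrite -expr2 -sin2cos2 sqrf_eq0 (gt_eqF (sin_gt0_pi lambda0_itv)).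
have den_cvg : 1 - p x * p x @[x --> F] --> 1 - c * c.
  by apply: cvgB; [exact: cvg_cst | exact: cvgM].
have sol : \forall x \near F,
    a1 x = p x * (1 - q x) / (1 - p x * p x) /\ a2 x = (q x - p x * p x) / (1 - p x * p x).
  near=> x; apply: yule_walker2_solve.
  - by near: x; apply: filterS yw => ? [].
  - by near: x; apply: filterS yw => ? [].
  - by near: x; exact: cvgr_neq0 den_cvg c_nz.
split.
- have -> : 2 * c = c * (1 - cos (2 * lambda0)) / (1 - c * c) by rewrite cos_mul2 -/c; field.
  have sol1 : \forall x \near F, p x * (1 - q x) / (1 - p x * p x) = a1 x.
    by apply: filterS sol => x [-> _].
  apply: cvg_trans (near_eq_cvg sol1) _.
  apply: cvgM; last exact: cvgV.
  by apply: cvgM => //; apply: cvgB => //; exact: cvg_cst.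
- have -> : -1 = (cos (2 * lambda0) - c * c) / (1 - c * c) by rewrite cos_mul2 -/c; field.
  have sol2 : \forall x \near F, (q x - p x * p x) / (1 - p x * p x) = a2 x.
    by apply: filterS sol => x [_ ->].
  apply: cvg_trans (near_eq_cvg sol2) _.
  apply: cvgM; last exact: cvgV.
  by apply: cvgB => //; exact: cvgM.
Unshelve. all: by end_near.
Qed.

Lemma lambda0_delta_cvg :
  a1 @ F --> 2 * cos lambda0 -> a2 @ F --> (-1 : R) ->
  lambda0_delta (a1 x) (a2 x) @[x --> F] --> lambda0.
Proof.
move=> a1_cvg a2_cvg; have [l0 lpi] := andP lambda0_itv.
have arg_cvg : a1 x * (1 - a2 x) / (- 4 * a2 x) @[x --> F] --> cos lambda0.
  have -> : cos lambda0 = 2 * cos lambda0 * (1 - -1) / (- 4 * -1) by field.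
  apply: cvgM; first by apply: cvgM => //; apply: cvgB => //; exact: cvg_cst.
  apply: cvgV; first by rewrite mulrN1 opprK.
  by apply: cvgM => //; exact: cvg_cst.
rewrite -[X in _ --> X](cosK (x := lambda0)); last by rewrite in_itv /= !ltW.
by apply: continuous_cvg arg_cvg; apply: continuous_acos; exact: cos_lt1.
Qed.

End ar2_limits.

Theorem lemma2 (R : realType) (lambda0 : R) (fU : R -> R)
  (a1 a2 : R -> R) :
  0 < lambda0 < pi ->
  {within `[0, pi], continuous fU} ->
  (exists2 m : R, 0 < m & forall l : R, 0 <= l <= pi -> m <= fU l) ->
  (* U: a zero-mean weakly stationary process with spectral density fU *)
  (exists (dU : measure_display) (TU : measurableType dU)
          (PU : probability TU R) (U : int -> {RV PU >-> R}),
      has_spectral_density PU U fU) ->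
  (* for each delta in (0,1): X_delta has spectral density f_delta and
     (a1 delta, a2 delta) is the unique minimizer of the prediction error *)
  (forall delta : R, 0 < delta < 1 ->
     exists (d : measure_display) (T : measurableType d)
            (P : probability T R) (X : int -> {RV P >-> R}),
       has_spectral_density P X (f_delta fU lambda0 delta) /\
       unique_minimizer P X (a1 delta) (a2 delta)) ->
  [/\ a1 x @[x --> 0^'+] --> (2 * cos lambda0 : R),
      a2 x @[x --> 0^'+] --> (-1 : R),
      (\forall x \near 0^'+, a2 x < 0) &
      lambda0_delta (a1 x) (a2 x) @[x --> 0^'+] --> lambda0].
Proof.
move=> lambda0_itv _ [m m_gt0 fU_ge_m] [_ [_ [_ [_ [fU_ge0 fU_int _ _ _]]]]] Xdelta.
have f_delta_int delta : 0 < delta < 1 ->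
    lebesgue_measure.-integrable `[- pi, pi] (EFin \o f_delta fU lambda0 delta).
  by move=> /Xdelta[? [? [? [? [[_ ? _ _ _] _]]]]].
have rho1 := spectral_cov1_ratio_f_delta_cvg lambda0_itv fU_ge0 fU_int fU_ge_m m_gt0
  f_delta_int.
have rho2 := spectral_cov2_ratio_f_delta_cvg lambda0_itv fU_ge0 fU_int fU_ge_m m_gt0
  f_delta_int.
have yw := yule_walker2_f_delta lambda0_itv fU_ge0 fU_ge_m m_gt0 f_delta_int _ _ Xdelta.
have [a1_cvg a2_cvg] := ar2_coefs_cvg lambda0_itv _ _ rho1 rho2 yw.
split => //; first by apply: (cvgr_lt _ a2_cvg); rewrite ltrN10.
exact: lambda0_delta_cvg.
Qed.
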